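(* Let $G=(\pi,R)$ be a monogamy-of-entanglement game with $X=\{0,1\}$, $\pi$ uniform on $X$, and each $R(a|x)$ an orthogonal projection. Let $c(G)=\max_{a,b\in A}\big\|\sqrt{R(a|0)}\sqrt{R(b|1)}\big\|^2$. Then for every positive integer $n$, $\omega^\ast(G^n)\ \ge\ \omega(G^n)\ \ge\ \left(\frac12+\frac12\sqrt{c(G)}\right)^n.$
   Context: A monogamy-of-entanglement game $G=(\pi,R)$ consists of a finite nonempty question set $X$, a probability distribution $\pi$ on $X$, a finite nonempty answer set $A$, a positive integer $m$, and positive semidefinite $m\times m$ matrices $R(a|x)$ with $\sum_{a\in A}R(a|x)=\mathbb{1}$ for each $x\in X$. The quantum value $\omega^\ast(G)$ is the supremum, over finite-dimensional Hilbert spaces $\mathcal{A},\mathcal{B}$, density operators $\rho$ on $\mathbb{C}^m\otimes\mathcal{A}\otimes\mathcal{B}$, and POVMs $\{A^x_a:a\in A\}$ on $\mathcal{A}$, $\{B^x_a:a\in A\}$ on $\mathcal{B}$ (one for each $x$), of $\sum_x\pi(x)\sum_a\mathrm{Tr}((R(a|x)\otimes A^x_a\otimes B^x_a)\rho)$. The unentangled value $\omega(G)$ is the same supremum over fully separable $\rho$, equivalently $\omega(G)=\max_{f:X\to A}\|\sum_x\pi(x)R(f(x)|x)\|$ (operator norm). The $n$-fold parallel repetition $G^n$ is the monogamy-of-entanglement game with question set $X^n$, distribution $\pi^n(x_1,\dots,x_n)=\prod_i\pi(x_i)$, answer set $A^n$, referee space $(\mathbb{C}^m)^{\otimes n}$,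 and measurement operators $R(a_1\cdots a_n|x_1\cdots x_n)=R(a_1|x_1)\otimes\cdots\otimes R(a_n|x_n)$. *)

(* Complex scalars: an arbitrary numClosedFieldType C
   (algebraically closed field with conjugation and partial order, e.g. algC). *)
From HB Require Import structures.
From mathcomp Require Import all_boot all_order all_algebra.
Set Implicit Arguments. Unset Strict Implicit. Unset Printing Implicit Defensive.
Import Order.TTheory GRing.Theory Num.Theory.
Local Open Scope ring_scope.

Section Defs.
Variable C : numClosedFieldType.

Definition adj (p q : nat) (M : 'M[C]_(p, q)) : 'M[C]_(q, p) := (map_mx Num.conj M)^T.

Definition hermitian (d : nat) (M : 'M[C]_d) : Prop := adj M = M.

Definition psd (d : nat) (M : 'M[C]_d) : Prop :=
  hermitian M /\ forall v : 'cV[C]_d, 0 <= (adj v *m M *m v) 0 0.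

Definition orth_proj (d : nat) (M : 'M[C]_d) : Prop := hermitian M /\ M *m M = M.

Definition density (d : nat) (rho : 'M[C]_d) : Prop := psd rho /\ \tr rho = 1.

Definition povm (A : finType) (d : nat) (P : A -> 'M[C]_d) : Prop :=
  (forall a, psd (P a)) /\ \sum_(a : A) P a = 1%:M.

Definition vnorm (d : nat) (v : 'cV[C]_d) : C := sqrtC ((adj v *m v) 0 0).

Definition is_lub (S : C -> Prop) (r : C) : Prop :=
  (forall s, S s -> s <= r) /\ (forall y, y < r -> exists s, S s /\ y < s).

(* sup S <= sup T  (no existence of the suprema needed) *)
Definition sup_le (S T : C -> Prop) : Prop :=
  forall s, S s -> forall y, y < s -> exists t, T t /\ y < t.

Definition le_sup (x : C) (T : C -> Prop) : Prop :=
  forall y, y < x -> exists t, T t /\ y < t.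

Definition is_opnorm (p q : nat) (M : 'M[C]_(p, q)) (r : C) : Prop :=
  is_lub (fun s => exists v : 'cV[C]_q, v != 0 /\ s = vnorm (M *m v) / vnorm v) r.

(* Kronecker product, indexed by the enumeration of the product index type *)
Definition kron (p q : nat) (P : 'M[C]_p) (Q : 'M[C]_q) : 'M[C]_(#|{: 'I_p * 'I_q}|) :=
  \matrix_(i, j) (P (enum_val i).1 (enum_val j).1 * Q (enum_val i).2 (enum_val j).2).

(* monogamy-of-entanglement game G = (pi, R): questions X, answers A, referee C^M *)
Definition moe_game (X A : finType) (M : nat) (pi : X -> C) (R : A -> X -> 'M[C]_M) : Prop :=
  [/\ (0 < #|X|)%N, (0 < #|A|)%N, (0 < M)%N,
      (forall x, 0 <= pi x) /\ \sum_(x : X) pi x = 1 &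
      forall x, povm (fun a => R a x)].

Definition strat_value (X A : finType) (M : nat) (pi : X -> C) (R : A -> X -> 'M[C]_M)
    (dA dB : nat) (rho : 'M[C]_(#|{: 'I_(#|{: 'I_M * 'I_dA}|) * 'I_dB}|))
    (PA : X -> A -> 'M[C]_dA) (PB : X -> A -> 'M[C]_dB) : C :=
  \sum_(x : X) pi x * \sum_(a : A) \tr (kron (kron (R a x) (PA x a)) (PB x a) *m rho).

(* the set of values achieved by quantum strategies; omega^* is its supremum *)
Definition qvalues (X A : finType) (M : nat) (pi : X -> C) (R : A -> X -> 'M[C]_M)
    : C -> Prop :=
  fun s => exists (dA dB : nat) rho PA PB,
    [/\ density rho, forall x, povm (PA x), forall x, povm (PB x) &
        s = @strat_value X A M pi R dA dB rho PA PB].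

(* omega(G) = max_f || sum_x pi x R(f x | x) ||, as the supremum of this set *)
Definition uvalues (X A : finType) (M : nat) (pi : X -> C) (R : A -> X -> 'M[C]_M)
    : C -> Prop :=
  fun s => exists f : X -> A, is_opnorm (\sum_(x : X) pi x *: R (f x) x) s.

Definition rep_pi (X : finType) (pi : X -> C) (n : nat) : {ffun 'I_n -> X} -> C :=
  fun x => \prod_(i < n) pi (x i).

Definition rep_R (X A : finType) (M : nat) (R : A -> X -> 'M[C]_M) (n : nat)
    : {ffun 'I_n -> A} -> {ffun 'I_n -> X} -> 'M[C]_(#|{: {ffun 'I_n -> 'I_M}}|) :=
  fun a x => \matrix_(i, j)
    let ii : {ffun 'I_n -> 'I_M} := enum_val i in
    let jj : {ffun 'I_n -> 'I_M} := enum_val j in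
    \prod_(k < n) R (a k) (x k) (ii k) (jj k).

(* c(G) = max_{a,b} || sqrt R(a|0) sqrt R(b|1) ||^2 ; for orthogonal projections
   sqrt R = R *)
Definition is_cG (A : finType) (M : nat) (R : A -> 'I_2 -> 'M[C]_M) (c : C) : Prop :=
  is_lub (fun s => exists a b r, is_opnorm (R a ord0 *m R b ord_max) r /\ s = r ^+ 2) c.

End Defs.

Arguments rep_pi {C X} pi n.
Arguments rep_R {C X A M} R n.

From Pilot Require Import Defs.
From HB Require Import structures.
From mathcomp Require Import all_boot all_order all_algebra.
From mathcomp Require Import ring.
Import Order.TTheory GRing.Theory Num.Theory.
Local Open Scope ring_scope.
Set Implicit Arguments. Unset Strict Implicit. Unset Printing Implicit Defensive.

(* omega^* >= omega: the unentangled operator K_f = sum_x pi(x) R(f(x)|x) is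
   positive semidefinite, so it has an eigenvector w for the eigenvalue
   ||K_f||.  Letting Alice and Bob hold one-dimensional spaces and answer f(x),
   with the referee in state w, wins with probability <w, K_f w>/<w, w> = ||K_f||.

   omega(G^n) >= ((1 + sqrt c)/2)^n: pick answers a, b with
   ||R(a|0) R(b|1)||^2 = c maximal.  For orthogonal projections P, Q with
   ||P Q||^2 = m, the operator P + Q has the eigenvalue 1 + sqrt m, attained on
   span {v, P v} for a top eigenvector v of Q P Q.  So the strategy 0 |-> a,
   1 |-> b has operator (P + Q)/2 with an eigenvector u for (1 + sqrt c)/2, and
   playing it in every coordinate of G^n gives the Kronecker power of that
   operator, with eigenvector u^(x)n for ((1 + sqrt c)/2)^n. *)

Section MatrixNorms.
Variable C : numClosedFieldType.

Lemma adjE p q (A : 'M[C]_(p, q)) : adj A = (A ^t*)%sesqui.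
Proof. by rewrite /adj map_trmx. Qed.

Lemma adj_mul p q r (A : 'M[C]_(p, q)) (B : 'M[C]_(q, r)) : adj (A *m B) = adj B *m adj A.
Proof. by rewrite /adj map_mxM trmx_mul. Qed.

Lemma adjK p q (A : 'M[C]_(p, q)) : adj (adj A) = A.
Proof. by apply/matrixP => i j; rewrite !mxE conjCK. Qed.

Lemma adjZ p q (a : C) (A : 'M[C]_(p, q)) : adj (a *: A) = a^* *: adj A.
Proof. by apply/matrixP => i j; rewrite !mxE rmorphM. Qed.

Lemma hermitianE d (M : 'M[C]_d) i j : Defs.hermitian M -> (M j i)^* = M i j.
Proof. by move/(congr1 (fun N : 'M_d => N i j)); rewrite !mxE. Qed.

Lemma hermitian_hermsymmx d (M : 'M[C]_d) : Defs.hermitian M -> M \is hermsymmx.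
Proof. by move=> HM; apply/is_hermitianmxP; rewrite expr0 scale1r -map_trmx -[LHS]HM. Qed.

Lemma hermitian_adj_mul p q (B : 'M[C]_(p, q)) : Defs.hermitian (adj B *m B).
Proof. by rewrite /Defs.hermitian adj_mul adjK. Qed.

Definition sqnorm q (v : 'cV[C]_q) : C := (adj v *m v) 0 0.

Lemma sqnormE q (v : 'cV[C]_q) : sqnorm v = \sum_i v i 0 * (v i 0)^*.
Proof. by rewrite /sqnorm mxE; apply: eq_bigr => i _; rewrite !mxE mulrC. Qed.

Lemma sqnorm_ge0 q (v : 'cV[C]_q) : 0 <= sqnorm v.
Proof. by rewrite sqnormE; apply: sumr_ge0 => i _; apply: mul_conjC_ge0. Qed.

Lemma sqnorm_eq0 q (v : 'cV[C]_q) : (sqnorm v == 0) = (v == 0).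
Proof.
apply/idP/eqP => [|->]; last by rewrite sqnormE big1 // => i _; rewrite mxE mul0r.
rewrite sqnormE => /eqP v0; apply/matrixP => i j; rewrite ord1 mxE.
have /(_ i isT)/eqP := psumr_eq0P (fun i _ => mul_conjC_ge0 (v i 0)) v0.
by rewrite mul_conjC_eq0 => /eqP.
Qed.

Lemma sqnorm_gt0 q (v : 'cV[C]_q) : v != 0 -> 0 < sqnorm v.
Proof. by move=> nz; rewrite lt_def sqnorm_eq0 nz sqnorm_ge0. Qed.

Lemma sqnormZ q (a : C) (v : 'cV[C]_q) : sqnorm (a *: v) = `|a| ^+ 2 * sqnorm v.
Proof. by rewrite /sqnorm adjZ -scalemxAl -scalemxAr !mxE normCK mulrA (mulrC a^*). Qed.

Lemma sqnorm_mul p q (B : 'M[C]_(p, q)) v : sqnorm (B *m v) = (adj v *m (adj B *m B) *m v) 0 0.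
Proof. by rewrite /sqnorm adj_mul !mulmxA. Qed.

Lemma vnorm_sqrt q (v : 'cV[C]_q) : vnorm v = sqrtC (sqnorm v).
Proof. by []. Qed.

Lemma bilinear_formE d (u : 'cV[C]_d) (K : 'M[C]_d) :
  (adj u *m K *m u) 0 0 = \sum_m \sum_m' (u m 0)^* * K m m' * u m' 0.
Proof.
rewrite mxE exchange_big /=; apply: eq_bigr => m' _.
by rewrite mxE mulr_suml; apply: eq_bigr => m _; rewrite !mxE.
Qed.

Lemma cV_neq0_dim q (z : 'cV[C]_q) : z != 0 -> (0 < q)%N.
Proof. by case: q z => [|//] z; rewrite (flatmx0 z) eqxx. Qed.

Lemma vnormZ q (a : C) (v : 'cV[C]_q) : vnorm (a *: v) = `|a| * vnorm v.
Proof. by rewrite !vnorm_sqrt sqnormZ sqrtCM ?nnegrE ?exprn_ge0 ?sqnorm_ge0 // sqrCK. Qed.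

Lemma real_fin_max (I : finType) (P : I -> C -> Prop) (i0 : I) :
  (forall i, exists x, x \is Num.real /\ P i x) ->
  exists j m, [/\ P j m, m \is Num.real & forall i, exists x, P i x /\ x <= m].
Proof.
move=> HP.
suff [j [m [Pm rm Hs]]] : exists j m,
    [/\ P j m, m \is Num.real & forall i, i \in enum I -> exists x, P i x /\ x <= m].
  by exists j, m; split => // i; apply: Hs; rewrite mem_enum.
elim: (enum I) => [|i s [j [m [Pm rm Hs]]]].
  by have [x [rx Px]] := HP i0; exists i0, x.
have [x [rx Px]] := HP i.
have /orP [xm|mx] := real_leVge rx rm.
  by exists j, m; split => // i'; rewrite in_cons => /orP [/eqP->|/Hs //]; exists x.
exists i, x; split => // i'; rewrite in_cons => /orP [/eqP->|/Hs [y [Py ym]]].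
  by exists x.
by exists y; split => //; apply: le_trans mx.
Qed.

Lemma hermitian_top_eigen q (K : 'M[C]_q) : Defs.hermitian K -> (0 < q)%N ->
  exists mu (v : 'cV[C]_q), [/\ mu \is Num.real, v != 0, K *m v = mu *: v &
     forall z : 'cV[C]_q, (adj z *m K *m z) 0 0 <= mu * sqnorm z].
Proof.
move=> /hermitian_hermsymmx HK q0.
have /orthomx_spectralP KE := hermitian_normalmx HK.
have dr := hermitian_spectral_diag_real HK.
set U := spectralmx K in KE; set d := spectral_diag K in KE dr.
have Uu : U \is unitarymx by exact: spectral_unitarymx.
have UUa : U *m adj U = 1%:M by rewrite adjE; apply/unitarymxP.
have UaU : adj U *m U = 1%:M by rewrite adjE -invmx_unitary // mulVmx // spectral_unit.
have {}KE : K = adj U *m diag_mx d *m U by rewrite adjE -invmx_unitary.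
have [i0 [_ [-> _ dmax]]] := @real_fin_max _ (fun i x => x = d 0 i) (Ordinal q0)
   (fun i => ex_intro _ (d 0 i) (conj (mxOverP dr 0 i) erefl)).
exists (d 0 i0), (adj U *m delta_mx i0 0); split; first exact: mxOverP.
- apply/eqP => U0; have := congr1 (mulmx U) U0.
  rewrite mulmxA UUa mul1mx mulmx0 => /matrixP /(_ i0 0).
  by rewrite !mxE !eqxx => /eqP; rewrite oner_eq0.
- rewrite KE -!mulmxA (mulmxA U) UUa mul1mx mul_diag_mx scalemxAr.
  congr (_ *m _); apply/matrixP => i j; rewrite !mxE.
  by have [->|_] := eqVneq i i0; rewrite ?mulr0.
- move=> z; set w := U *m z.
  have -> : (adj z *m K *m z) 0 0 = (adj w *m (diag_mx d *m w)) 0 0.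
    by rewrite KE /w adj_mul !mulmxA.
  have -> : sqnorm z = sqnorm w.
    by rewrite /w sqnorm_mul UaU mulmx1.
  rewrite sqnormE mxE mulr_sumr; apply: ler_sum => i _.
  rewrite mul_diag_mx !mxE mulrCA (mulrC (_ ^*)); apply: ler_wpM2r.
    by rewrite mul_conjC_ge0.
  by have [y [-> ]] := dmax i.
Qed.

Lemma opnorm_exists p q (B : 'M[C]_(p, q)) : (0 < q)%N ->
  exists mu, [/\ 0 <= mu, is_opnorm B (sqrtC mu) &
     exists2 v : 'cV[C]_q, v != 0 & adj B *m B *m v = mu *: v].
Proof.
move=> q0; have [mu [v [_ v0 Bv Bmax]]] := hermitian_top_eigen (hermitian_adj_mul B) q0.
have Bv2 : sqnorm (B *m v) = mu * sqnorm v by rewrite sqnorm_mul -mulmxA Bv -scalemxAr mxE.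
have mu0 : 0 <= mu by rewrite -(pmulr_lge0 _ (sqnorm_gt0 v0)) -Bv2 sqnorm_ge0.
exists mu; split => //; last by exists v.
split=> [s [z [z0 ->]]|y ly].
  rewrite !vnorm_sqrt ler_pdivrMr ?sqrtC_gt0 ?sqnorm_gt0 // -sqrtCM ?nnegrE ?sqnorm_ge0 //.
  have Bz : sqnorm (B *m z) <= mu * sqnorm z by rewrite sqnorm_mul; apply: Bmax.
  by rewrite ler_sqrtC // nnegrE ?mulr_ge0 ?sqnorm_ge0.
exists (sqrtC mu); split => //; exists v; split => //.
by rewrite !vnorm_sqrt Bv2 sqrtCM ?nnegrE ?sqnorm_ge0 // mulfK // sqrtC_eq0 sqnorm_eq0.
Qed.

Lemma opnorm_ge0 p q (B : 'M[C]_(p, q)) r : (0 < q)%N -> is_opnorm B r -> 0 <= r.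
Proof.
move=> q0 [ub _].
have e0 : (delta_mx (Ordinal q0) 0 : 'cV[C]_q) != 0.
  by apply/eqP => /matrixP /(_ (Ordinal q0) 0) /eqP; rewrite !mxE !eqxx oner_eq0.
apply: le_trans (ub _ (ex_intro _ _ (conj e0 erefl))).
by rewrite divr_ge0 // sqrtC_ge0 sqnorm_ge0.
Qed.

Lemma opnorm_unique p q (B : 'M[C]_(p, q)) r1 r2 : (0 < q)%N ->
  is_opnorm B r1 -> is_opnorm B r2 -> r1 = r2.
Proof.
move=> q0; suff le_r r r' : is_opnorm B r -> is_opnorm B r' -> r <= r'.
  by move=> B1 B2; apply/eqP; rewrite eq_le !le_r.
move=> Br Br'; have [[_ lb] [ub' _]] := (Br, Br').
rewrite real_leNgt ?ger0_real ?(opnorm_ge0 q0 Br) ?(opnorm_ge0 q0 Br') //.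
apply/negP => /lb [s [Bs lts]].
by have := lt_le_trans lts (ub' s Bs); rewrite ltxx.
Qed.

Lemma opnorm_bound p q (B : 'M[C]_(p, q)) r z :
  is_opnorm B r -> vnorm (B *m z) <= r * vnorm z.
Proof.
move=> [ub _]; have [->|z0] := eqVneq z 0.
  by rewrite mulmx0 !vnorm_sqrt /sqnorm !mulmx0 mxE sqrtC0 mulr0.
have nz_gt0 : 0 < vnorm z by rewrite vnorm_sqrt sqrtC_gt0 sqnorm_gt0.
by rewrite -ler_pdivrMr //; apply: ub; exists z.
Qed.

Lemma opnorm_ge_eigen p (B : 'M[C]_p) r lam (w : 'cV[C]_p) :
  is_opnorm B r -> w != 0 -> B *m w = lam *: w -> `|lam| <= r.
Proof.
move=> [ub _] w0 Bw; apply: ub; exists w; split => //.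
by rewrite Bw vnormZ mulfK // vnorm_sqrt sqrtC_eq0 sqnorm_eq0.
Qed.

End MatrixNorms.

Section Positivity.
Variable C : numClosedFieldType.

Lemma orth_proj_psd q (P : 'M[C]_q) : orth_proj P -> psd P.
Proof. by move=> [HP PP]; split => // v; rewrite -{1}PP -{1}HP -sqnorm_mul sqnorm_ge0. Qed.

Lemma psd_sum (X : finType) q (w : X -> C) (P : X -> 'M[C]_q) :
  (forall x, 0 <= w x) -> (forall x, psd (P x)) -> psd (\sum_x w x *: P x).
Proof.
move=> w0 HP; split.
  apply/matrixP => i j; rewrite !mxE !summxE rmorph_sum; apply: eq_bigr => x _.
  by rewrite !mxE rmorphM /= geC0_conj // (hermitianE _ _ (proj1 (HP x))).
move=> v; rewrite mulmx_sumr mulmx_suml summxE; apply: sumr_ge0 => x _.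
by rewrite -scalemxAr -scalemxAl mxE mulr_ge0 //; case: (HP x).
Qed.

(* [K v + sqrt mu v] is an eigenvector of [K] for [sqrt mu]; if it vanishes,
   then [K v = - sqrt mu v] and positivity of [K] gives the bound for [v]. *)
Lemma psd_rayleigh_sqrt_eigen q (K : 'M[C]_q) (mu : C) (v : 'cV[C]_q) :
  psd K -> 0 <= mu -> v != 0 -> adj K *m K *m v = mu *: v ->
  exists2 w : 'cV[C]_q, w != 0 & sqrtC mu * sqnorm w <= (adj w *m K *m w) 0 0.
Proof.
move=> [HK Kpos] mu0 v0; rewrite HK => KKv.
set s := sqrtC mu; have s0 : 0 <= s by rewrite sqrtC_ge0.
have [w0|w0] := eqVneq (K *m v + s *: v) 0.
  exists v => //; have Kv : K *m v = - (s *: v) by apply/eqP; rewrite -addr_eq0 w0.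
  have sv : s * sqnorm v <= 0.
    by have := Kpos v; rewrite -mulmxA Kv -scaleNr -scalemxAr mxE mulNr oppr_ge0.
  exact: le_trans sv (Kpos v).
have Kw : K *m (K *m v + s *: v) = s *: (K *m v + s *: v).
  rewrite mulmxDr mulmxA KKv -scalemxAr scalerDr scalerA -expr2 sqrtCK.
  exact: addrC.
by exists (K *m v + s *: v) => //; rewrite -mulmxA Kw -scalemxAr mxE.
Qed.

End Positivity.

Definition strategy_op (C : numClosedFieldType) (X A : finType) M (pi : X -> C)
  (R : A -> X -> 'M[C]_M) (f : X -> A) : 'M[C]_M := \sum_x pi x *: R (f x) x.

Section ProductStrategies.
Variables (C : numClosedFieldType) (M : nat).

Lemma povm_indicator (A : finType) (a0 : A) :
  povm (fun a => (((a == a0)%:R : C)%:M : 'M[C]_1)).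
Proof.
split=> [a|]; first split.
- by apply/matrixP => i j; rewrite !mxE !ord1 eqxx !mulr1n conjC_nat.
- by move=> v; rewrite mul_mx_scalar -scalemxAl mxE mulr_ge0 ?ler0n ?sqnorm_ge0.
apply/matrixP => i j; rewrite summxE !mxE (bigD1 a0) //= !mxE eqxx big1 ?addr0 //.
by move=> a /negbTE na; rewrite !mxE na mul0rn.
Qed.

Lemma sum_enum_pair1 (T : finType) (F : T -> C) :
  \sum_(i < #|{: T * 'I_1}|) F (enum_val i).1 = \sum_t F t.
Proof.
rewrite -(big_enum_val (fun p : T * 'I_1 => F p.1)) /=.
rewrite -(pair_big predT predT (fun a (b : 'I_1) => F a)) /=.
by apply: eq_bigr => t _; rewrite big_ord1.
Qed.

(* With one-dimensional Alice and Bob spaces the joint space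
   [C^M (x) C^1 (x) C^1] is indexed by pairs of pairs; [embed11] identifies
   [C^M] with it. *)
Let N := #|{: 'I_#|{: 'I_M * 'I_1}| * 'I_1}|.
Let drop11 (i : 'I_N) : 'I_M := (enum_val (enum_val i).1).1.

Definition embed11 (u : 'cV[C]_M) : 'cV[C]_N := \col_i u (drop11 i) 0.

Lemma sum_drop11 (F : 'I_M -> C) : \sum_(i < N) F (drop11 i) = \sum_m F m.
Proof. by rewrite (sum_enum_pair1 (fun j => F (enum_val j).1)) sum_enum_pair1. Qed.

Lemma sqnorm_embed11 u : sqnorm (embed11 u) = sqnorm u.
Proof.
rewrite !sqnormE (eq_bigr (fun i => u (drop11 i) 0 * (u (drop11 i) 0)^*)).
  exact: sum_drop11 (fun m => u m 0 * (u m 0)^*).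
by move=> i _; rewrite mxE.
Qed.

Lemma form_embed11_kron u (P : 'M[C]_M) (c : C) :
  (adj (embed11 u) *m kron (kron P c%:M) (c%:M : 'M_1) *m embed11 u) 0 0
    = c * c * (adj u *m P *m u) 0 0.
Proof.
rewrite !bilinear_formE mulr_sumr -sum_drop11; apply: eq_bigr => i _.
rewrite mulr_sumr -(sum_drop11 (fun m' => c * c * _)); apply: eq_bigr => j _.
by rewrite !mxE !ord1 !eqxx !mulr1n; ring.
Qed.

Lemma mxtrace_mul_rank1 q (K : 'M[C]_q) (w : 'cV[C]_q) :
  \tr (K *m (w *m adj w)) = (adj w *m K *m w) 0 0.
Proof. by rewrite mulmxA mxtrace_mulC mulmxA /mxtrace big_ord1. Qed.

Lemma qvalues_rayleigh (X A : finType) (pi : X -> C) (R : A -> X -> 'M[C]_M)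
    (f : X -> A) (u : 'cV[C]_M) :
  u != 0 -> qvalues pi R ((adj u *m strategy_op pi R f *m u) 0 0 / sqnorm u).
Proof.
move=> u0; have r0 : 0 <= (sqnorm u)^-1 by rewrite invr_ge0 sqnorm_ge0.
pose rho := (sqnorm u)^-1 *: (embed11 u *m adj (embed11 u)).
pose P x a := (((a == f x)%:R : C)%:M : 'M[C]_1).
exists 1%N, 1%N, rho, P, P; split; try by move=> x; apply: povm_indicator.
  split; [split|].
- by rewrite /Defs.hermitian /rho adjZ adj_mul adjK geC0_conj.
  move=> v; rewrite /rho -scalemxAr -scalemxAl mxE mulr_ge0 //.
  by rewrite -{1}(adjK (embed11 u)) -sqnorm_mul sqnorm_ge0.
- rewrite mxtraceZ mxtrace_mulC /mxtrace big_ord1.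
  by rewrite (sqnorm_embed11 u : (adj _ *m _) 0 0 = _) mulVf // sqnorm_eq0.
rewrite /strat_value /strategy_op mulmx_sumr mulmx_suml summxE mulr_suml.
apply: eq_bigr => x _; rewrite -scalemxAr -scalemxAl mxE.
rewrite (bigD1 (f x)) //= big1 => [|a /negbTE fa].
  rewrite /P eqxx /rho -scalemxAr mxtraceZ mxtrace_mul_rank1 form_embed11_kron.
  by rewrite addr0 mulr1n !mul1r mulrAC -mulrA.
by rewrite /P fa /rho -scalemxAr mxtraceZ mxtrace_mul_rank1 form_embed11_kron !mul0r mulr0.
Qed.

End ProductStrategies.

Lemma sup_le_uvalues_qvalues (C : numClosedFieldType) (X A : finType) M
    (pi : X -> C) (R : A -> X -> 'M[C]_M) :
  (forall f, psd (strategy_op pi R f)) -> sup_le (uvalues pi R) (qvalues pi R).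
Proof.
move=> Kpsd s [f [_ lbK]] y /lbK [_ [[z [z0 ->]] ltyz]].
have [mu [mu0 [ubK _] [v v0 Kv]]] := opnorm_exists (strategy_op pi R f) (cV_neq0_dim z0).
have [w w0 Kw] := psd_rayleigh_sqrt_eigen (Kpsd f) mu0 v0 Kv.
exists ((adj w *m strategy_op pi R f *m w) 0 0 / sqnorm w); split.
  exact: qvalues_rayleigh.
apply: lt_le_trans ltyz (le_trans (ubK _ _) _); first by exists z.
by rewrite ler_pdivlMr ?sqnorm_gt0.
Qed.

Section ParallelRepetition.
Variables (C : numClosedFieldType) (X A : finType) (M n : nat).
Variables (pi : X -> C) (R : A -> X -> 'M[C]_M).

Let idx (i : 'I_#|{: {ffun 'I_n -> 'I_M}}|) : {ffun 'I_n -> 'I_M} := enum_val i.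

Lemma rep_R_orth_proj a x : (forall a x, orth_proj (R a x)) -> orth_proj (rep_R R n a x).
Proof.
move=> HR; split.
  apply/matrixP => i j; rewrite !mxE rmorph_prod; apply: eq_bigr => k _.
  exact/hermitianE/(proj1 (HR _ _)).
apply/matrixP => i l; rewrite !mxE.
under eq_bigr do rewrite !mxE -big_split /=.
rewrite -(big_enum_val (fun t : {ffun 'I_n -> 'I_M} => \prod_k
   (R (a k) (x k) (idx i k) (t k) * R (a k) (x k) (t k) (idx l k)))).
rewrite -(bigA_distr_bigA (fun k m => R (a k) (x k) (idx i k) m * R (a k) (x k) m (idx l k))).
by apply: eq_bigr => k _; rewrite -[in RHS](proj2 (HR (a k) (x k))) mxE.
Qed.

Definition tensor_pow (u : 'cV[C]_M) : 'cV[C]_(#|{: {ffun 'I_n -> 'I_M}}|) :=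
  \col_i \prod_(k < n) u (idx i k) 0.

Lemma tensor_pow_neq0 u : u != 0 -> tensor_pow u != 0.
Proof.
move=> u0; have [m um] : exists m, u m 0 != 0.
  have [m um|u0'] := pickP (fun m => u m 0 != 0); first by exists m.
  case/negP: u0; apply/eqP/matrixP => m j; rewrite ord1 mxE.
  by have /negbFE/eqP := u0' m.
apply/eqP => /matrixP /(_ (enum_rank [ffun _ => m]) 0) /eqP.
rewrite !mxE /idx enum_rankK (eq_bigr (fun=> u m 0)) => [|k _]; last by rewrite ffunE.
by rewrite prodr_const card_ord expf_eq0 (negbTE um) andbF.
Qed.

Lemma rep_strategy_opE (g : X -> A) i j :
  strategy_op (rep_pi pi n) (rep_R R n) (fun x => [ffun k => g (x k)]) i j =
  \prod_k strategy_op pi R g (idx i k) (idx j k).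
Proof.
rewrite summxE (eq_bigr (fun x : {ffun 'I_n -> X} =>
    \prod_k (pi (x k) * R (g (x k)) (x k) (idx i k) (idx j k)))) => [|x _]; last first.
  by rewrite !mxE -big_split; apply: eq_bigr => k _; rewrite ffunE.
under [RHS]eq_bigr do rewrite summxE.
by rewrite bigA_distr_bigA; apply: eq_bigr => x _; apply: eq_bigr => k _; rewrite mxE.
Qed.

Lemma rep_strategy_op_eigen (g : X -> A) u lam :
  strategy_op pi R g *m u = lam *: u ->
  strategy_op (rep_pi pi n) (rep_R R n) (fun x => [ffun k => g (x k)]) *m tensor_pow u
    = lam ^+ n *: tensor_pow u.
Proof.
set T := strategy_op pi R g => Tu; apply/matrixP => i j; rewrite ord1 !mxE.
under eq_bigr do rewrite rep_strategy_opE mxE -big_split /=.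
rewrite -(big_enum_val (fun t : {ffun 'I_n -> 'I_M} => \prod_k (T (idx i k) (t k) * u (t k) 0))).
rewrite -(bigA_distr_bigA (fun k m => T (idx i k) m * u m 0)).
have -> : lam ^+ n = \prod_(k < n) lam by rewrite prodr_const card_ord.
rewrite -big_split; apply: eq_bigr => k _.
by have /matrixP /(_ (idx i k) 0) := Tu; rewrite !mxE.
Qed.

End ParallelRepetition.

Section TwoProjections.
Variables (C : numClosedFieldType) (q : nat) (P Q : 'M[C]_q).
Hypotheses (HP : orth_proj P) (HQ : orth_proj Q).

(* If [Q P Q v = m v] with [m > 0], then [v] lies in the range of [Q] and
   [P + Q] acts on [span {v, P v}] with top eigenvector [sqrt m v + P v]. *)
Lemma proj_add_eigen (v : 'cV[C]_q) m :
  v != 0 -> 0 < m -> adj (P *m Q) *m (P *m Q) *m v = m *: v ->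
  exists2 w : 'cV[C]_q, w != 0 & (P + Q) *m w = (1 + sqrtC m) *: w.
Proof.
have [[sP PP] [sQ QQ]] := (HP, HQ).
move=> v0 m0; rewrite adj_mul sP sQ -!mulmxA (mulmxA P P) PP => QPQv.
set s := sqrtC m; have s0 : 0 < s by rewrite sqrtC_gt0.
have ss : s * s = m by rewrite -expr2 sqrtCK.
have Qv : Q *m v = v.
  apply: (scalerI (negbT (gt_eqF m0))); rewrite scalemxAr -QPQv !mulmxA QQ.
  by rewrite -!mulmxA.
have QPv : Q *m (P *m v) = m *: v by rewrite -{1}Qv -QPQv !mulmxA.
exists (s *: v + P *m v).
  apply/eqP => w0; have Pv : P *m v = - (s *: v).
    by apply/eqP; rewrite -addr_eq0 addrC w0.
  move: QPv; rewrite Pv -scaleNr -scalemxAr Qv => /eqP.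
  by rewrite -subr_eq0 -scalerBl scaler_eq0 (negbTE v0) orbF -opprD oppr_eq0 gt_eqF ?addr_gt0.
rewrite mulmxDl !mulmxDr -!scalemxAr QPv !mulmxA PP Qv.
rewrite scalerDr scalerA mulrDl mul1r ss !scalerDl scale1r.
by rewrite addrC [P *m v + _]addrC addrCA addrA.
Qed.

Lemma proj_add_eigen_orth : P != 0 -> P *m Q = 0 ->
  exists2 w : 'cV[C]_q, w != 0 & (P + Q) *m w = w.
Proof.
have [[sP PP] [sQ _]] := (HP, HQ); move=> P0 PQ.
have QP : Q *m P = 0 by rewrite -sP -sQ -adj_mul PQ; apply/matrixP => i j; rewrite !mxE conjC0.
have [j Pj] : exists j, P *m delta_mx j (0 : 'I_1) != 0.
  have [j Pj|Pj] := pickP (fun j => P *m delta_mx j (0 : 'I_1) != 0); first by exists j.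
  case/eqP: P0; apply/matrixP => i j; have /negbFE/eqP/matrixP/(_ i 0) := Pj j.
  by rewrite -colE !mxE.
by exists (P *m delta_mx j 0); rewrite // mulmxDl !mulmxA PP QP mul0mx addr0.
Qed.

End TwoProjections.

Section MaximalOverlap.
Variables (C : numClosedFieldType) (A : finType) (M : nat) (R : A -> 'I_2 -> 'M[C]_M).
Hypothesis M0 : (0 < M)%N.

Let B (ab : A * A) := R ab.1 ord0 *m R ab.2 ord_max.

Lemma opnorm_eq0 p (K : 'M[C]_(p, M)) : is_opnorm K 0 -> K = 0.
Proof.
move=> K0; apply/matrixP => i j; pose z : 'cV[C]_M := delta_mx j 0.
have : sqnorm (K *m z) == 0.
  rewrite -sqrtC_eq0 eq_le sqrtC_ge0 sqnorm_ge0 andbT -(mul0r (vnorm z)).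
  exact: opnorm_bound.
by rewrite sqnorm_eq0 => /eqP/matrixP/(_ i 0); rewrite -colE !mxE.
Qed.

Lemma is_cG_attained c (ab0 : A * A) :
  is_cG R c -> 0 <= c /\ exists ab, is_opnorm (B ab) (sqrtC c).
Proof.
move=> [ubc lbc].
pose Pr ab x := 0 <= x /\ is_opnorm (B ab) (sqrtC x).
have [ab [m [[m0 Bm] _ mmax]]] : exists ab m,
    [/\ Pr ab m, m \is Num.real & forall ab', exists x, Pr ab' x /\ x <= m].
  apply: real_fin_max ab0 _ => ab; have [mu [mu0 Bmu _]] := opnorm_exists (B ab) M0.
  by exists mu; split; [exact: ger0_real|].
have mc : m <= c by rewrite -[m]sqrtCK; apply: ubc; exists ab.1, ab.2, (sqrtC m).
suff cm : c = m by split; [rewrite cm | exists ab; rewrite cm].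
apply/eqP; rewrite eq_le mc andbT real_leNgt ?ger0_real ?(le_trans m0 mc) //.
apply/negP => /lbc [_ [[a [b [r [Br ->]]]] ltmr]].
have [x [[x0 Bx] xm]] := mmax (a, b).
rewrite (opnorm_unique M0 Br Bx) sqrtCK in ltmr.
by have := lt_le_trans ltmr xm; rewrite ltxx.
Qed.

Lemma proj_pair_top_eigen c :
  (forall x, \sum_a R a x = 1%:M) -> (forall a x, orth_proj (R a x)) -> is_cG R c ->
  0 <= c /\ exists a b (w : 'cV[C]_M), w != 0 /\ (R a ord0 + R b ord_max) *m w = (1 + sqrtC c) *: w.
Proof.
move=> HR1 HR HcG.
have [a0 Ra0] : exists a0, R a0 ord0 != 0.
  have [a Ra|R0] := pickP (fun a => R a ord0 != 0); first by exists a.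
  have := HR1 ord0; rewrite big1 => [|a _]; last exact/eqP/negbFE/R0.
  move/matrixP/(_ (Ordinal M0) (Ordinal M0)); rewrite !mxE eqxx => /eqP.
  by rewrite eq_sym oner_eq0.
have [c0 [[a b] Bab]] := is_cG_attained (a0, a0) HcG; split=> //.
have [c_eq0|c_neq0] := eqVneq c 0.
  have B0 : B (a0, a0) = 0.
    have [r [r0 Br _]] := opnorm_exists (B (a0, a0)) M0.
    have r_eq0 : r = 0.
      apply/eqP; rewrite eq_le r0 andbT -c_eq0 -[r]sqrtCK.
      by apply: (proj1 HcG); exists a0, a0, (sqrtC r).
    by apply: opnorm_eq0; rewrite -sqrtC0 -r_eq0.
  have [w w0 Ew] := proj_add_eigen_orth (HR a0 ord0) (HR a0 ord_max) Ra0 B0.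
  by exists a0, a0, w; rewrite c_eq0 sqrtC0 addr0 scale1r.
have [mu [_ Bmu [v v0 Ev]]] := opnorm_exists (B (a, b)) M0.
have mu_c : mu = c by rewrite -[mu]sqrtCK (opnorm_unique M0 Bmu Bab) sqrtCK.
have mu_gt0 : 0 < mu by rewrite mu_c lt_def c_neq0 c0.
have [w w0 Ew] := proj_add_eigen (HR a ord0) (HR b ord_max) v0 mu_gt0 Ev.
by exists a, b, w; rewrite -mu_c.
Qed.

End MaximalOverlap.

Unset Implicit Arguments. Set Strict Implicit.

Theorem mainTheorem6 (C : numClosedFieldType) (A : finType) (M : nat)
    (pi : 'I_2 -> C) (R : A -> 'I_2 -> 'M[C]_M) (c : C) :
  moe_game pi R ->
  (forall x, pi x = 2^-1) ->
  (forall a x, orth_proj (R a x)) ->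
  is_cG R c ->
  forall n : nat, (0 < n)%N ->
    sup_le (uvalues (rep_pi pi n) (rep_R R n)) (qvalues (rep_pi pi n) (rep_R R n)) /\
    le_sup ((2^-1 + 2^-1 * sqrtC c) ^+ n) (uvalues (rep_pi pi n) (rep_R R n)).
Proof.
move=> [_ _ M0 [pi0 _] HRpovm] Hpi HR HcG n _; split.
  apply: sup_le_uvalues_qvalues => f; apply: psd_sum => x.
    by apply: prodr_ge0 => k _.
  exact/orth_proj_psd/rep_R_orth_proj.
have [c0 [a [b [u [u0 Eu]]]]] := proj_pair_top_eigen M0 (fun x => proj2 (HRpovm x)) HR HcG.
pose g (x : 'I_2) := if x == ord0 then a else b.
set lam := 2^-1 + 2^-1 * sqrtC c.
have Tu : strategy_op pi R g *m u = lam *: u.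
  have -> : strategy_op pi R g = 2^-1 *: (R a ord0 + R b ord_max).
    by rewrite /strategy_op big_ord_recl big_ord1 !Hpi scalerDr (_ : lift ord0 ord0 = ord_max) //; apply: val_inj.
  by rewrite -scalemxAl Eu scalerA mulrDr mulr1.
have uw0 := tensor_pow_neq0 n u0.
pose gn (x : {ffun 'I_n -> 'I_2}) := [ffun k => g (x k)].
have [r [_ Kr _]] := opnorm_exists (strategy_op (rep_pi pi n) (rep_R R n) gn) (cV_neq0_dim uw0).
move=> y ylt; exists (sqrtC r); split; first by exists gn.
apply: lt_le_trans ylt (le_trans _ (opnorm_ge_eigen Kr uw0 (rep_strategy_op_eigen n Tu))).
have lam0 : 0 <= lam by rewrite addr_ge0 ?mulr_ge0 ?sqrtC_ge0 ?invr_ge0 ?ler0n.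
by rewrite ger0_norm ?exprn_ge0.
Qed.
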